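(* For the Diverse Population-Based EA on the weighted vertex cover problem with $n$ vertices, a solution $x$ with the two properties (1) $LP(x)=LP(0^n)-Cost(x)$ and (2) there is an optimal solution of the LP for $G(x)$ which assigns $1/2$ to each non-isolated vertex of $G(x)$, is included in the population in expected time $O(n^3)$.
   Context: Weighted vertex cover: $G=(V,E)$, $V=\{v_1,\dots,v_n\}$, $w:V\to\mathbb{N}^+$. Search points $x\in\{0,1\}^n$ ($v_i$ selected iff $x_i=1$); $|x|_1$ is the number of ones. $Cost(x)=\sum_i w(v_i)x_i$; $G(x)=(V(x),E(x))$ with $V(x)=V\setminus\{v_i:x_i=1\}$, $E(x)$ = edges with no selected endpoint. The LP for $G(x)$: minimize $\sum_{v_i\in V(x)}w(v_i)y_i$ s.t. $y_i+y_j\ge1$ for $\{v_i,v_j\}\in E(x)$, $0\le y_i\le1$; $LP(x)$ is its optimal value. Alternative mutation operator on $x$: choose $b\in\{0,1\}$ uniformly; if $b=1$, flip each $x_i$ with probability $1/2$ if $v_i$ is incident to an edge of $E(x)$ and with probability $1/n$ otherwise; if $b=0$, flip each bit independently with probability $1/n$. Diverse Population-Based EA: start with uniformly random $x$, $P=\{x\}$. Each iteration: choose $x\in P$ uniformly; create $x'$ by the alternative mutation operator; add $x'$ to $P$; let $P'=\{y\in P:|y|_1=|x'|_1\}$; let $y_{min_1}\in P'$ minimize $Cost(z)+LP(z)$ and $y_{min_2}\in P'$ minimize $Cost(z)+2LP(z)$ over $P'$; set $P\leftarrow(P\setminus P')\cup\{y_{min_1},y_{min_2}\}$. Time = number of iterations.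 *)

From HB Require Import structures.
From mathcomp Require Import all_boot all_order all_algebra.
From mathcomp Require Import boolp classical_sets reals.
Set Implicit Arguments. Unset Strict Implicit. Unset Printing Implicit Defensive.
Import Order.TTheory GRing.Theory Num.Theory.
Local Open Scope ring_scope.

Definition bs (n : nat) := {ffun 'I_n -> bool}.
Definition zero_bs (n : nat) : bs n := [ffun => false].

Definition ones n (x : bs n) : nat := (\sum_(i < n) (x i : nat))%N.

Section VC.
Variables (R : realType) (n : nat) (e : rel 'I_n) (w : 'I_n -> nat).

Definition cost (x : bs n) : R := \sum_(i < n) (if x i then (w i)%:R else 0).

(* {v_i,v_j} is an edge of E(x): an edge with no selected endpoint *)
Definition uncov_edge (x : bs n) (i j : 'I_n) : bool := [&& e i j, ~~ x i & ~~ x j].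

(* v_i is incident to an edge of E(x) (= non-isolated vertex of G(x)) *)
Definition nonisolated (x : bs n) (i : 'I_n) : bool := [exists j, uncov_edge x i j].

(* LP for G(x): variables y_i for v_i in V(x) (other coordinates are ignored) *)
Definition lp_feasible (x : bs n) (y : 'I_n -> R) : Prop :=
  (forall i, ~~ x i -> 0 <= y i <= 1) /\
  (forall i j, uncov_edge x i j -> 1 <= y i + y j).

Definition lp_obj (x : bs n) (y : 'I_n -> R) : R :=
  \sum_(i < n | ~~ x i) (w i)%:R * y i.

Definition LP (x : bs n) : R :=
  inf [set v | exists y, lp_feasible x y /\ v = lp_obj x y].

Definition prop1 (x : bs n) : Prop := LP x = LP (zero_bs n) - cost x.

Definition prop2 (x : bs n) : Prop :=
  exists y, [/\ lp_feasible x y, lp_obj x y = LP x &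
                forall i, ~~ x i -> nonisolated x i -> y i = 1 / 2].

Definition target (P : {set bs n}) : Prop :=
  exists x, [/\ x \in P, prop1 x & prop2 x].

Definition bitprob (p : R) (flip : bool) : R := if flip then p else 1 - p.
Definition flip_p (x : bs n) (i : 'I_n) : R :=
  if nonisolated x i then 1 / 2 else 1 / n%:R.
Definition mut_prob (x x' : bs n) : R :=
  1 / 2 * \prod_(i < n) bitprob (flip_p x i) (x i != x' i) +
  1 / 2 * \prod_(i < n) bitprob (1 / n%:R) (x i != x' i).

Definition f1 (x : bs n) : R := cost x + LP x.
Definition f2 (x : bs n) : R := cost x + 2 * LP x.

(* a (deterministic, otherwise arbitrary) tie-breaking rule selecting a
   minimizer of f in every nonempty set *)
Definition argmin_picker (f : bs n -> R) (pick : {set bs n} -> bs n) : Prop :=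
  forall S : {set bs n}, S != finset.set0 ->
    pick S \in S /\ forall y, y \in S -> f (pick S) <= f y.

Variables (pick1 pick2 : {set bs n} -> bs n).

Definition step (P : {set bs n}) (x' : bs n) : {set bs n} :=
  let P1 := x' |: P in
  let P' := finset.finset (fun y => (y \in P1) && (ones y == ones x')) in
  (P1 :\: P') :|: [set pick1 P'; pick2 P'].

Definition trans (P Q : {set bs n}) : R :=
  \sum_(x in P) \sum_(x' : bs n)
     (#|P|%:R)^-1 * mut_prob x x' * (step P x' == Q)%:R.

Definition init (P : {set bs n}) : R :=
  \sum_(x : bs n) (2 ^ n)%:R^-1 * (P == [set x])%:R.

(* surv t P = Pr[population after t iterations is P and the target was
   not reached at iterations 0..t] *)
Fixpoint surv (t : nat) (P : {set bs n}) : R :=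
  if `[< target P >] then 0 else
  match t with
  | O => init P
  | t'.+1 => \sum_(Q : {set bs n}) surv t' Q * trans Q P
  end.

(* sum_{t<N} Pr[T > t]; E[T] = sup_N of this *)
Definition partial_exp_time (N : nat) : R :=
  \sum_(t < N) \sum_(P : {set bs n}) surv t P.

End VC.

(* The LP relaxation of vertex cover has a half-integral optimum:
   moving the coordinates in (0, 1/2) and in (1/2, 1) in opposite directions,
   in the direction that does not increase the objective, until one more of
   them reaches {0, 1/2, 1} keeps feasibility.  Cost + LP is bounded below by
   LP(0^n), with equality exactly on property (1).  Hence if x has property (1)
   but not (2), a half-integral optimum of LP(x) has a vertex at value 1, and
   selecting it yields a solution with property (1) and one more 1-bit.

   The population keeps, for every number of ones, a minimizer of Cost + LP and
   at most one other point.  So the potential "largest number of ones with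
   property (1)" (before property (1) appears: "smallest number of ones", which
   leads to 0^n) never decreases, and unless the target is reached a fixed
   one-bit flip of a fixed member increases it, with probability at least
   1 / (#|P| 8n) >= 1 / (16 n (n + 1)).  The potential takes at most 2n + 3
   values, so additive drift bounds the expected time by
   16 n (n + 1) (2n + 2) <= 128 n^3. *)

From HB Require Import structures.
From mathcomp Require Import all_boot all_order all_algebra.
From mathcomp Require Import boolp classical_sets reals.
From mathcomp Require Import ring lra zify.
Import Order.TTheory GRing.Theory Num.Theory.
Local Open Scope ring_scope.
Set Implicit Arguments. Unset Strict Implicit. Unset Printing Implicit Defensive.

Lemma expectation_le_drop (R : realFieldType) (I : finType) (P : pred I)
    (a f : I -> R) (c d : R) (i0 : I) :
  (forall i, P i -> 0 <= a i) -> \sum_(i | P i) a i = 1 ->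
  (forall i, P i -> f i <= c) -> P i0 -> f i0 <= c - d ->
  \sum_(i | P i) a i * f i <= c - a i0 * d.
Proof.
move=> a_ge0 a_sum1 f_le Pi0 f_i0.
apply: le_trans (_ : \sum_(i | P i) a i * (c - (i == i0)%:R * d) <= _).
  apply: ler_sum => i Pi; rewrite ler_wpM2l ?a_ge0 //.
  by case: eqP => [->|_]; rewrite ?mul1r ?mul0r ?subr0 ?f_le.
under eq_bigr do rewrite mulrBr mulrCA.
rewrite sumrB -mulr_suml a_sum1 mul1r (bigD1 i0) //= eqxx mul1r big1 ?addr0 //.
by move=> i /andP[_ /negbTE->]; rewrite mul0r.
Qed.

(* Additive drift with killing: [s t P] is the mass in state [P] at time [t]
   not yet absorbed.  A potential [V >= 0] dropping by 1 in expectation from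
   every state carrying mass bounds the total surviving mass, i.e. the
   expected absorption time. *)
Section AdditiveDrift.
Variables (R : realFieldType) (S : finType) (tr : S -> S -> R) (V : S -> R) (s : nat -> S -> R).
Hypothesis s_ge0 : forall t P, 0 <= s t P.
Hypothesis V_ge0 : forall P, 0 <= V P.
Hypothesis s_succ : forall t P, s t.+1 P <= \sum_Q s t Q * tr Q P.
Hypothesis V_drift : forall t Q, s t Q != 0 -> \sum_P tr Q P * V P <= V Q - 1.

Let D t := \sum_P s t P * V P.

Lemma drift_step t : D t.+1 <= D t - \sum_P s t P.
Proof.
apply: le_trans (_ : \sum_P (\sum_Q s t Q * tr Q P) * V P <= _).
  by apply: ler_sum => P _; rewrite ler_wpM2r.
under eq_bigr do rewrite mulr_suml.
rewrite exchange_big -sumrB; apply: ler_sum => Q _.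
under eq_bigr do rewrite -mulrA; rewrite -mulr_sumr -[X in _ - X]mulr1 -mulrBr.
have [->|/V_drift drift] := eqVneq (s t Q) 0; first by rewrite !mul0r.
by rewrite ler_wpM2l.
Qed.

Lemma drift_telescope N : \sum_(t < N) \sum_P s t P + D N <= D 0.
Proof.
elim: N => [|N IH]; first by rewrite big_ord0 add0r.
by rewrite big_ord_recr /=; have := drift_step N; lra.
Qed.

Lemma additive_drift N : \sum_(t < N) \sum_P s t P <= \sum_P s 0 P * V P.
Proof.
have : 0 <= D N by apply: sumr_ge0 => P _; rewrite mulr_ge0.
by have := drift_telescope N; rewrite /D; lra.
Qed.

End AdditiveDrift.

Lemma bernoulli_ineq (R : realFieldType) (p : R) k :
  0 <= p <= 1 -> 1 - k%:R * p <= (1 - p) ^+ k.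
Proof.
case/andP => p_ge0 p_le1; elim: k => [|k IH]; first by rewrite mul0r subr0 expr0.
rewrite exprS -natr1.
have : (1 - p) * (1 - k%:R * p) <= (1 - p) * (1 - p) ^+ k by rewrite ler_wpM2l //; lra.
have : 0 <= k%:R * p * p by rewrite !mulr_ge0.
lra.
Qed.

Section HalfIntegralOptimum.
Variables (R : realType) (n : nat) (e : rel 'I_n) (w : 'I_n -> nat) (x : bs n).
Implicit Types (y : 'I_n -> R) (t : R).

Local Notation feasible := (lp_feasible e x).
Local Notation obj := (lp_obj w x).

Definition half_integral y := forall i, ~~ x i -> [\/ y i = 0, y i = 1/2 | y i = 1].

Definition lo y i := [&& ~~ x i, 0 < y i & y i < 1/2].
Definition hi y i := [&& ~~ x i, 1/2 < y i & y i < 1].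
Definition frac_set y := [set i | lo y i || hi y i].

(* The Nemhauser-Trotter perturbation: coordinates in (0, 1/2) and in (1/2, 1)
   move in opposite directions, so edges between the two classes keep their sum. *)
Definition shift y t i := y i + t * ((hi y i)%:R - (lo y i)%:R).

Lemma lo_hiF y i : lo y i -> hi y i = false.
Proof. by case/and3P=> _ _ lt_y; apply/negbTE/negP => /and3P[_ gt_y _]; lra. Qed.

Lemma hi_loF y i : hi y i -> lo y i = false.
Proof. by case/and3P=> _ gt_y _; apply/negbTE/negP => /and3P[_ _ lt_y]; lra. Qed.

Lemma shift_lo y t i : lo y i -> shift y t i = y i - t.
Proof. by move=> lo_i; rewrite /shift lo_i lo_hiF //= sub0r mulrN1. Qed.

Lemma shift_hi y t i : hi y i -> shift y t i = y i + t.
Proof. by move=> hi_i; rewrite /shift hi_i hi_loF //= subr0 mulr1. Qed.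

Lemma nonfrac_value y i : ~~ x i -> 0 <= y i <= 1 -> i \notin frac_set y ->
  [\/ y i = 0, y i = 1/2 | y i = 1].
Proof.
move=> xi /andP[y_ge0 y_le1]; rewrite inE /lo /hi xi negb_or /= => /andP[].
case: (ltrgtP (y i) (1/2)) => [_|_|->]; rewrite ?andbT ?andbF //= -?leNgt.
- by move=> y_le0 _; constructor 1; lra.
- by move=> _ y_ge1; constructor 3; lra.
- by constructor 2.
Qed.

Lemma half_integral_frac_set0 y : feasible y -> #|frac_set y| = 0%N -> half_integral y.
Proof.
move=> [y01 _] /eqP; rewrite cards_eq0 => /eqP fy0 i xi.
by apply: nonfrac_value; rewrite ?fy0 ?inE ?y01.
Qed.

Definition shift_slope y : R := \sum_(i < n | ~~ x i) (w i)%:R * ((hi y i)%:R - (lo y i)%:R).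

Lemma lp_obj_shift y t : obj (shift y t) = obj y + t * shift_slope y.
Proof.
rewrite /lp_obj mulr_sumr -big_split /=; apply: eq_bigr => i _.
by rewrite /shift mulrDr mulrCA.
Qed.

Lemma shift_nonfrac y t i : i \notin frac_set y -> shift y t i = y i.
Proof.
by rewrite inE negb_or /shift => /andP[/negbTE -> /negbTE ->]; rewrite subrr mulr0 addr0.
Qed.

Lemma frac_set_shift_proper y t i0 : i0 \in frac_set y ->
  [\/ shift y t i0 = 0, shift y t i0 = 1/2 | shift y t i0 = 1] ->
  frac_set (shift y t) \proper frac_set y.
Proof.
move=> fi0 yi0; apply/properP; split.
  apply/fintype.subsetP=> i; apply: contraTT => nfi.
  by move: (nfi); rewrite !inE /lo /hi (shift_nonfrac t nfi).
exists i0 => //; rewrite inE /lo /hi negb_or.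
by case: yi0 => ->; apply/andP; split; apply/negP => /and3P[_]; lra.
Qed.

Section Shift.
Variables (y : 'I_n -> R) (t : R).
Hypothesis y_feasible : feasible y.
Hypothesis lo_shift : forall i, lo y i -> 0 <= y i - t <= 1/2.
Hypothesis hi_shift : forall i, hi y i -> 1/2 <= y i + t <= 1.

Lemma shift_cases i : ~~ x i ->
  [\/ [/\ y i < 1/2, shift y t i = y i - t, 0 <= y i - t & y i - t <= 1/2],
      [/\ 1/2 < y i, y i < 1, shift y t i = y i + t, 1/2 <= y i + t & y i + t <= 1] |
      shift y t i = y i /\ [\/ y i = 0, y i = 1/2 | y i = 1]].
Proof.
move=> xi; case fi: (i \in frac_set y); last first.
  constructor 3; rewrite shift_nonfrac ?fi //; split => //.
  by apply: nonfrac_value; rewrite ?fi // (proj1 y_feasible).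
move: fi; rewrite inE => /orP[lo_i|hi_i].
  have /andP[? ?] := lo_shift lo_i; case/and3P: (lo_i) => _ _ ?.
  by constructor 1; rewrite shift_lo.
have /andP[? ?] := hi_shift hi_i; case/and3P: (hi_i) => _ ? ?.
by constructor 2; rewrite shift_hi.
Qed.

Lemma shift_feasible : feasible (shift y t).
Proof.
have [y01 y_edge] := y_feasible; split.
  move=> i xi; apply/andP.
  by case: (shift_cases xi) => [[? -> ? ?]|[? ? -> ? ?]|[-> [] ->]]; split; lra.
move=> i j uij; have := y_edge i j uij.
case/and3P: uij => _ xi xj.
by case: (shift_cases xi) => [[? -> ? ?]|[? ? -> ? ?]|[-> []->]];
   case: (shift_cases xj) => [[? -> ? ?]|[? ? -> ? ?]|[-> []->]]; lra.
Qed.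

Lemma shift_improves i0 : t * shift_slope y <= 0 -> i0 \in frac_set y ->
  [\/ shift y t i0 = 0, shift y t i0 = 1/2 | shift y t i0 = 1] ->
  exists2 y2, feasible y2 /\ obj y2 <= obj y & (#|frac_set y2| < #|frac_set y|)%N.
Proof.
move=> slope fi0 hit; exists (shift y t).
  by split; [exact: shift_feasible | rewrite lp_obj_shift; lra].
exact/proper_card/(frac_set_shift_proper fi0 hit).
Qed.

End Shift.

Section RoundStep.
Variables (y : 'I_n -> R) (j0 : 'I_n).
Hypotheses (y_feasible : feasible y) (j0_frac : j0 \in frac_set y).

Let improvement := exists2 y2, feasible y2 /\ obj y2 <= obj y &
  (#|frac_set y2| < #|frac_set y|)%N.

Lemma round_step_outward : shift_slope y <= 0 -> improvement.
Proof.
move=> slope_le0; pose gap i := if lo y i then y i else 1 - y i.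
have [i0 fi0 gap_min] := @arg_minP _ _ _ j0 (fun i => i \in frac_set y) gap j0_frac.
have lo_gap i : lo y i -> gap i0 <= y i.
  by move=> lo_i; apply: le_trans (gap_min i _) _; rewrite /gap ?inE ?lo_i.
have hi_gap i : hi y i -> gap i0 <= 1 - y i.
  by move=> hi_i; apply: le_trans (gap_min i _) _; rewrite /gap ?inE ?hi_i ?orbT ?(hi_loF hi_i).
have [gap0 shift0] : 0 <= gap i0 /\ [\/ shift y (gap i0) i0 = 0,
    shift y (gap i0) i0 = 1/2 | shift y (gap i0) i0 = 1].
  move: fi0; rewrite inE /gap => /orP[lo0|hi0].
    by rewrite shift_lo // lo0; case/and3P: lo0 => _ ? _; split; [lra | constructor 1; lra].
  by rewrite shift_hi // hi_loF //; case/and3P: hi0 => _ _ ?; split; [lra | constructor 3; lra].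
apply: (shift_improves y_feasible _ _ _ fi0 shift0).
- by move=> i lo_i; have := lo_gap i lo_i; case/and3P: lo_i => _ ? ? ?; apply/andP; split; lra.
- by move=> i hi_i; have := hi_gap i hi_i; case/and3P: hi_i => _ ? ? ?; apply/andP; split; lra.
- exact: mulr_ge0_le0.
Qed.

Lemma round_step_inward : 0 <= shift_slope y -> improvement.
Proof.
move=> slope_ge0; pose gap i := if lo y i then 1/2 - y i else y i - 1/2.
have [i0 fi0 gap_min] := @arg_minP _ _ _ j0 (fun i => i \in frac_set y) gap j0_frac.
have lo_gap i : lo y i -> gap i0 <= 1/2 - y i.
  by move=> lo_i; apply: le_trans (gap_min i _) _; rewrite /gap ?inE ?lo_i.
have hi_gap i : hi y i -> gap i0 <= y i - 1/2.
  by move=> hi_i; apply: le_trans (gap_min i _) _; rewrite /gap ?inE ?hi_i ?orbT ?(hi_loF hi_i).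
have [gap0 shift0] : 0 <= gap i0 /\ [\/ shift y (- gap i0) i0 = 0,
    shift y (- gap i0) i0 = 1/2 | shift y (- gap i0) i0 = 1].
  move: fi0; rewrite inE /gap => /orP[lo0|hi0].
    by rewrite shift_lo // lo0; case/and3P: lo0 => _ ? ?; split; [lra | constructor 2; lra].
  by rewrite shift_hi // hi_loF //; case/and3P: hi0 => _ ? ?; split; [lra | constructor 2; lra].
apply: (shift_improves y_feasible _ _ _ fi0 shift0).
- by move=> i lo_i; have := lo_gap i lo_i; case/and3P: lo_i => _ ? ? ?; apply/andP; split; lra.
- by move=> i hi_i; have := hi_gap i hi_i; case/and3P: hi_i => _ ? ? ?; apply/andP; split; lra.
- by rewrite mulNr oppr_le0 mulr_ge0.
Qed.

End RoundStep.

Lemma round_step y : feasible y -> (0 < #|frac_set y|)%N ->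
  exists2 y2, feasible y2 /\ obj y2 <= obj y & (#|frac_set y2| < #|frac_set y|)%N.
Proof.
move=> fy /card_gt0P[j0 fj0].
by have [/(round_step_outward fy fj0)|/ltW/(round_step_inward fy fj0)] := lerP (shift_slope y) 0.
Qed.

Lemma round_half_integral y : feasible y ->
  exists y', [/\ feasible y', half_integral y' & obj y' <= obj y].
Proof.
have [k] := ubnP #|frac_set y|; elim: k y => // k IH y lt_k fy.
have [frac0|frac_gt0] := posnP #|frac_set y|.
  by exists y; split => //; exact: half_integral_frac_set0.
have [y2 [fy2 le_obj] lt_card] := round_step fy frac_gt0.
have [y' [fy' hy' le_obj']] := IH y2 (leq_trans lt_card lt_k) fy2.
by exists y'; split => //; exact: le_trans le_obj' le_obj.
Qed.

Lemma feasible_ext y1 y2 : (forall i, ~~ x i -> y1 i = y2 i) -> feasible y1 -> feasible y2.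
Proof.
move=> eq_y [y01 y_edge]; split=> [i xi|i j uij]; first by rewrite -eq_y ?y01.
by case/and3P: (uij) => _ xi xj; rewrite -!eq_y ?y_edge.
Qed.

Lemma lp_obj_ext y1 y2 : (forall i, ~~ x i -> y1 i = y2 i) -> obj y1 = obj y2.
Proof. by move=> eq_y; apply: eq_bigr => i xi; rewrite eq_y. Qed.

(* A finite type of half-integral vectors, over which the LP minimum is attained. *)
Definition half_vec (f : {ffun 'I_n -> 'I_3}) i : R := (f i)%:R / 2.

Lemma half_vec_half_integral f : half_integral (half_vec f).
Proof.
move=> i _; rewrite /half_vec.
by case: (f i) => -[|[|[|//]]] _ /=; [constructor 1 | constructor 2 | constructor 3]; lra.
Qed.

Lemma half_integral_half_vec y : half_integral y ->
  exists f, forall i, ~~ x i -> y i = half_vec f i.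
Proof.
move=> hy; exists [ffun i => if y i == 0 then inord 0 else if y i == 1/2 then inord 1 else inord 2].
move=> i xi; rewrite /half_vec ffunE.
by case: (hy i xi) => ->; rewrite ?eqxx; do ?case: eqP; rewrite ?inordK //; lra.
Qed.

Lemma LP_half_integral_min : exists ys,
  [/\ feasible ys, half_integral ys, LP R e w x = obj ys &
      forall y, feasible y -> obj ys <= obj y].
Proof.
pose P f := `[< feasible (half_vec f) >].
have P2 : P [ffun => inord 2].
  by apply/asboolP; split=> [i _|i j _]; rewrite /half_vec !ffunE inordK //; lra.
have [fs /asboolP fs_feas fs_min] := arg_minP (fun f => obj (half_vec f)) P2.
have ys_min y : feasible y -> obj (half_vec fs) <= obj y.
  move=> fy; have [y' [fy' hy' le_obj]] := round_half_integral fy.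
  have [g eq_g] := half_integral_half_vec hy'.
  have Pg : P g by apply/asboolP; exact: feasible_ext fy'.
  by apply: le_trans (fs_min g Pg) _; rewrite -(lp_obj_ext eq_g).
exists (half_vec fs); split => //; first exact: half_vec_half_integral.
apply/eqP; rewrite eq_le; apply/andP; split.
  apply: ge_inf; last by exists (half_vec fs).
  by exists (obj (half_vec fs)) => v [y [fy ->]]; exact: ys_min.
apply: lb_le_inf; first by exists (obj (half_vec fs)), (half_vec fs).
by move=> v [y [fy ->]]; exact: ys_min.
Qed.

End HalfIntegralOptimum.

Section Property1.
Variables (R : realType) (n : nat) (e : rel 'I_n) (w : 'I_n -> nat).
Implicit Types (x : bs n) (y : 'I_n -> R).

Local Notation LP := (LP R e w).
Local Notation cost := (cost R w).
Local Notation prop1 := (prop1 R e w).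

Definition lift_sol x y i : R := if x i then 1 else y i.

Lemma lift_sol_feasible x y :
  lp_feasible e x y -> lp_feasible e (zero_bs n) (lift_sol x y).
Proof.
move=> [y01 y_edge]; split=> [i _|i j]; rewrite /lift_sol.
  by case: ifP => [_|/negbT /y01 //]; apply/andP; split; lra.
rewrite /uncov_edge !ffunE /= andbT => eij.
case xi: (x i); case xj: (x j).
- lra.
- by have /andP[? _] := y01 j (negbT xj); lra.
- by have /andP[? _] := y01 i (negbT xi); lra.
- by apply: y_edge; rewrite /uncov_edge eij xi xj.
Qed.

Lemma lp_obj_lift_sol x y : lp_obj w (zero_bs n) (lift_sol x y) = cost x + lp_obj w x y.
Proof.
rewrite /lp_obj /cost (eq_bigl predT) => [|i]; last by rewrite ffunE.
rewrite [\sum_(i < n | ~~ x i) _]big_mkcond -big_split /=.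
by apply: eq_bigr => i _; rewrite /lift_sol; case: (x i); rewrite ?mulr1 ?add0r ?addr0.
Qed.

Lemma LP_zero_le_f1 x : LP (zero_bs n) <= f1 R e w x.
Proof.
rewrite /f1; have [ys [fys _ -> _]] := LP_half_integral_min R e w x.
have [y0 [_ _ -> y0_min]] := LP_half_integral_min R e w (zero_bs n).
by rewrite -lp_obj_lift_sol; exact/y0_min/lift_sol_feasible.
Qed.

Lemma prop1E x : prop1 x <-> f1 R e w x = LP (zero_bs n).
Proof. by rewrite /prop1 /f1; split => h; lra. Qed.

Lemma prop1_zero : prop1 (zero_bs n).
Proof.
by rewrite /prop1 /cost big1 ?subr0 // => i _; rewrite ffunE.
Qed.

Definition flip_bit x v : bs n := [ffun i => if i == v then ~~ x i else x i].

Lemma cost_flip_bit x v : ~~ x v -> cost (flip_bit x v) = cost x + (w v)%:R.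
Proof.
move=> xv; rewrite /cost (bigD1 v) //= [X in _ = X + _](bigD1 v) //=.
rewrite ffunE eqxx (negbTE xv) /= add0r addrC; congr (_ + _).
by apply: eq_bigr => i iv; rewrite ffunE (negbTE iv).
Qed.

Lemma lp_obj_flip_bit x v y : ~~ x v ->
  lp_obj w x y = (w v)%:R * y v + lp_obj w (flip_bit x v) y.
Proof.
move=> xv; rewrite /lp_obj (bigD1 v) //=; congr (_ + _); apply: eq_bigl => i.
by rewrite ffunE; case: eqP => [->|_]; rewrite ?xv ?negbK ?andbT ?andbF.
Qed.

Lemma lp_feasible_sub x x' y : (forall i, x i -> x' i) ->
  lp_feasible e x y -> lp_feasible e x' y.
Proof.
move=> sub_x [y01 y_edge]; have nsub i : ~~ x' i -> ~~ x i by apply/contra/sub_x.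
split=> [i /nsub /y01 //|i j /and3P[eij /nsub xi /nsub xj]].
by apply: y_edge; rewrite /uncov_edge eij xi xj.
Qed.

Lemma flip_bit_sub x v : ~~ x v -> forall i, x i -> flip_bit x v i.
Proof. by move=> xv i xi; rewrite ffunE; case: eqP => [iv|//]; move: xv; rewrite -iv xi. Qed.

(* A half-integral optimum of LP(x) either certifies property (2) or has a
   vertex at value 1, which can be selected without losing property (1). *)
Lemma prop1_extend x : prop1 x -> ~ prop2 R e w x ->
  exists2 v, ~~ x v & prop1 (flip_bit x v).
Proof.
move=> p1x np2x; have [ys [fys hys LPx _]] := LP_half_integral_min R e w x.
case: (pickP (fun v => ~~ x v && (ys v == 1))) => [v /andP[xv /eqP ys_v]|no_one].
  exists v => //; have [y2 [_ _ LPv y2_min]] := LP_half_integral_min R e w (flip_bit x v).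
  have obj_ys := lp_obj_flip_bit ys xv; rewrite ys_v mulr1 in obj_ys.
  have := y2_min ys (lp_feasible_sub (flip_bit_sub xv) fys).
  have := LP_zero_le_f1 (flip_bit x v); move: p1x.
  by rewrite /prop1 /f1 cost_flip_bit // -LPv; lra.
case: np2x; exists ys; split => // i xi /existsP[j uij].
case/and3P: (uij) => _ _ xj; have := proj2 fys i j uij.
have := no_one i; have := no_one j; rewrite xi xj /=.
by case: (hys i xi) => ->; case: (hys j xj) => ->; rewrite ?eqxx //; lra.
Qed.

End Property1.

Section Ones.
Variable n : nat.
Implicit Types (x y : bs n).

Lemma ones_le y : (ones y <= n)%N.
Proof.
rewrite /ones -[n in (_ <= n)%N]card_ord -sum1_card.
by apply: leq_sum => i _; exact: leq_b1.
Qed.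

Lemma ones_flip_bit x v : (ones (flip_bit x v) + x v = ones x + ~~ x v)%N.
Proof.
rewrite /ones (bigD1 v) //= [X in _ = (X + _)%N](bigD1 v) //= ffunE eqxx.
rewrite (eq_bigr (fun i => (x i : nat))) => [|i iv]; last by rewrite ffunE (negbTE iv).
by case: (x v) => /=; lia.
Qed.

End Ones.

Section Population.
Variables (R : realType) (n : nat) (e : rel 'I_n) (w : 'I_n -> nat).
Variables (pick1 pick2 : {set bs n} -> bs n).
Hypothesis pick1_min : argmin_picker (f1 R e w) pick1.
Hypothesis pick2_min : argmin_picker (f2 R e w) pick2.
Implicit Types (Q : {set bs n}) (x y : bs n).

Local Notation step := (step pick1 pick2).
Local Notation prop1 := (prop1 R e w).

Definition same_level Q x' := [set y in x' |: Q | ones y == ones x'].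

Lemma stepE Q x' : step Q x' =
  (x' |: Q) :\: same_level Q x' :|: [set pick1 (same_level Q x'); pick2 (same_level Q x')].
Proof. by []. Qed.

Lemma same_level_neq0 Q x' : same_level Q x' != finset.set0.
Proof. by apply/set0Pn; exists x'; rewrite !inE !eqxx. Qed.

Lemma pick1_same_level Q x' : pick1 (same_level Q x') \in same_level Q x'.
Proof. exact: (pick1_min (same_level_neq0 Q x')).1. Qed.

Lemma pick2_same_level Q x' : pick2 (same_level Q x') \in same_level Q x'.
Proof. exact: (pick2_min (same_level_neq0 Q x')).1. Qed.

Lemma pick1_step Q x' :
  pick1 (same_level Q x') \in step Q x' /\ ones (pick1 (same_level Q x')) = ones x'.
Proof.
split; first by rewrite stepE !inE eqxx orbT.
by have := pick1_same_level Q x'; rewrite inE => /andP[_ /eqP].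
Qed.

Lemma step_other_level Q x' y : y \in x' |: Q -> ones y != ones x' -> y \in step Q x'.
Proof. by move=> yQ y_lvl; rewrite stepE !inE -in_setU1 yQ y_lvl. Qed.

Lemma step_level Q x' y : y \in x' |: Q -> exists2 z, z \in step Q x' & ones z = ones y.
Proof.
move=> yQ; have [/eqP y_lvl|y_lvl] := boolP (ones y == ones x').
  by have [z_in z_lvl] := pick1_step Q x'; exists (pick1 (same_level Q x')); rewrite ?y_lvl.
by exists y; first exact: step_other_level.
Qed.

(* [pick1] minimizes [f1], and [f1] reaches its lower bound [LP 0^n] exactly
   on property (1). *)
Lemma step_prop1 Q x' y : y \in x' |: Q -> prop1 y ->
  exists z, [/\ z \in step Q x', ones z = ones y & prop1 z].
Proof.
move=> yQ p1y; have [/eqP y_lvl|y_lvl] := boolP (ones y == ones x'); last first.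
  by exists y; split => //; exact: step_other_level.
have [z_in z_lvl] := pick1_step Q x'; exists (pick1 (same_level Q x')).
split; rewrite ?y_lvl //; apply/(prop1E R).
have y_same : y \in same_level Q x' by rewrite inE yQ y_lvl eqxx.
have := (pick1_min (same_level_neq0 Q x')).2 y y_same.
have := LP_zero_le_f1 R e w (pick1 (same_level Q x')).
by move/(prop1E R): p1y => ->; lra.
Qed.

Definition level k Q := [set y in Q | ones y == k].

Definition pop_inv Q := (0 < #|Q|)%N /\ forall k, (#|level k Q| <= 2)%N.

Lemma step_pop_inv Q x' : pop_inv Q -> pop_inv (step Q x').
Proof.
move=> [_ lvlQ]; split.
  by apply/card_gt0P; exists (pick1 (same_level Q x')); case: (pick1_step Q x').
move=> k; rewrite /level stepE; set S := same_level Q x'.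
have [->|k_lvl] := eqVneq k (ones x').
  apply: leq_trans (subset_leq_card _) (_ : #|[set pick1 S; pick2 S]| <= 2)%N; last first.
    by rewrite cards2; case: (_ != _).
  apply/fintype.subsetP => y; rewrite !inE.
  case/andP => /or3P[/andP[y_S y_in]|->|->] y_lvl; rewrite ?orbT //.
  by rewrite y_in y_lvl in y_S.
apply: leq_trans (subset_leq_card _) (lvlQ k); apply/fintype.subsetP => y.
have S_lvl z : z \in S -> ones z = ones x' by rewrite inE => /andP[_ /eqP].
rewrite !inE => /andP[/or3P[/andP[_ /orP[/eqP->|->//]]|/eqP->|/eqP->] /eqP y_lvl];
  by rewrite -y_lvl ?S_lvl ?pick1_same_level ?pick2_same_level ?eqxx in k_lvl.
Qed.

Lemma card_pop_inv (Q : {set bs n}) : pop_inv Q -> (#|Q| <= 2 * n.+1)%N.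
Proof.
move=> [_ lvlQ]; rewrite -sum1_card.
rewrite (partition_big (fun y => inord (ones y) : 'I_n.+1) predT) //=.
apply: leq_trans (_ : \sum_(k < n.+1) 2 <= _)%N; last by rewrite sum_nat_const card_ord mulnC.
apply: leq_sum => k _; rewrite sum1_card; apply: leq_trans (lvlQ k).
apply/subset_leq_card/fintype.subsetP => y; rewrite !inE => /andP[-> /eqP <-].
by rewrite inordK ?eqxx // ltnS ones_le.
Qed.

End Population.

Section Potential.
Variables (R : realType) (n : nat) (e : rel 'I_n) (w : 'I_n -> nat).
Variables (pick1 pick2 : {set bs n} -> bs n).
Hypothesis pick1_min : argmin_picker (f1 R e w) pick1.
Implicit Types (Q : {set bs n}) (x y : bs n).

Local Notation step := (step pick1 pick2).
Local Notation prop1 := (prop1 R e w).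

(* The shift by one lets [best_prop1 Q = 0] mean that no member has property (1). *)
Definition best_prop1 Q := (\max_(y in Q | `[< prop1 y >]) (ones y).+1)%N.
Definition sparsity Q := (\max_(y in Q) (n - ones y))%N.
Definition potential Q :=
  if (0 < best_prop1 Q)%N then (n.+1 + best_prop1 Q)%N else sparsity Q.

Lemma best_prop1_le Q : (best_prop1 Q <= n.+1)%N.
Proof. by apply/bigmax_leqP => y _; rewrite ltnS ones_le. Qed.

Lemma sparsity_le Q : (sparsity Q <= n)%N.
Proof. by apply/bigmax_leqP => y _; rewrite leq_subr. Qed.

Lemma potential_le Q : (potential Q <= 2 * n + 2)%N.
Proof.
rewrite /potential; have := best_prop1_le Q; have := sparsity_le Q.
by case: ifP; lia.
Qed.

Lemma potential_mono Q Q' : (best_prop1 Q <= best_prop1 Q')%N ->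
  (sparsity Q <= sparsity Q')%N -> (potential Q <= potential Q')%N.
Proof.
rewrite /potential; have := sparsity_le Q; have := sparsity_le Q'.
by case: ifP; case: ifP; lia.
Qed.

Lemma potential_lt Q Q' : (best_prop1 Q <= best_prop1 Q')%N ->
  (sparsity Q <= sparsity Q')%N ->
  (best_prop1 Q < best_prop1 Q')%N \/ best_prop1 Q = 0%N /\ (sparsity Q < sparsity Q')%N ->
  (potential Q < potential Q')%N.
Proof.
rewrite /potential; have := sparsity_le Q; have := sparsity_le Q'.
by case: ifP; case: ifP; lia.
Qed.

Lemma best_prop1_step Q x' y : y \in x' |: Q -> prop1 y ->
  ((ones y).+1 <= best_prop1 (step Q x'))%N.
Proof.
move=> yQ p1y; have [z [z_in <- p1z]] := step_prop1 pick2 pick1_min yQ p1y.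
by apply: (leq_bigmax_cond (F := fun y => (ones y).+1)); rewrite z_in; apply/asboolP.
Qed.

Lemma sparsity_step Q x' y : y \in x' |: Q -> (n - ones y <= sparsity (step Q x'))%N.
Proof.
move=> yQ; have [z z_in <-] := step_level pick2 pick1_min yQ.
exact: (leq_bigmax_cond (F := fun y => n - ones y)%N).
Qed.

Lemma best_prop1_step_mono Q x' : (best_prop1 Q <= best_prop1 (step Q x'))%N.
Proof.
apply/bigmax_leqP => y /andP[yQ /asboolP p1y].
by apply: best_prop1_step p1y; rewrite in_setU1 yQ orbT.
Qed.

Lemma sparsity_step_mono Q x' : (sparsity Q <= sparsity (step Q x'))%N.
Proof.
by apply/bigmax_leqP => y yQ; apply: sparsity_step; rewrite in_setU1 yQ orbT.
Qed.

Lemma potential_step Q x' : (potential Q <= potential (step Q x'))%N.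
Proof. exact: potential_mono (best_prop1_step_mono Q x') (sparsity_step_mono Q x'). Qed.

Lemma potential_progress Q : (0 < #|Q|)%N -> ~ target R e w Q ->
  exists x v, x \in Q /\ (potential Q < potential (step Q (flip_bit x v)))%N.
Proof.
move=> Q_gt0 no_target.
have step_lt x v := potential_lt (best_prop1_step_mono Q (flip_bit x v))
  (sparsity_step_mono Q (flip_bit x v)).
have flipQ x v : flip_bit x v \in flip_bit x v |: Q by exact: setU11.
have [best0|best_gt0] := posnP (best_prop1 Q).
  have [x xQ x_max] := eq_bigmax_cond (fun y => n - ones y)%N Q_gt0.
  have [v xv] : exists v, x v.
    case: (pickP x) => [v xv|x0]; first by exists v.
    have x_zero : x = zero_bs n by apply/ffunP => i; rewrite !ffunE x0.
    have := @leq_bigmax_cond _ [pred y in Q | `[< prop1 y >]] (fun y => (ones y).+1) x.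
    by rewrite -/(best_prop1 Q) best0 inE xQ x_zero (asboolT (prop1_zero R e w)) => /(_ isT).
  exists x, v; split => //; apply: step_lt; right; split => //.
  have := sparsity_step (flipQ x v); have := ones_flip_bit x v; have := ones_le x.
  by rewrite /sparsity x_max xv /=; lia.
have [|x] := @eq_bigmax_cond _ [pred y in Q | `[< prop1 y >]] (fun y => (ones y).+1).
  case: (pickP [pred y in Q | `[< prop1 y >]]) => [y yA|A0]; first by apply/card_gt0P; exists y.
  by move: best_gt0; rewrite /best_prop1 big_pred0.
rewrite inE => /andP[xQ /asboolP p1x] x_max.
have best_x : best_prop1 Q = (ones x).+1 by rewrite -x_max.
have [v xv p1v] := prop1_extend p1x (fun p2x => no_target (ex_intro _ x (And3 xQ p1x p2x))).
exists x, v; split => //; apply: step_lt; left.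
have := best_prop1_step (flipQ x v) p1v; have := ones_flip_bit x v.
by rewrite best_x (negbTE xv) /=; lia.
Qed.

End Potential.

Section Mutation.
Variables (R : realType) (n : nat) (e : rel 'I_n).
Hypothesis n_gt0 : (0 < n)%N.
Implicit Types (x : bs n).

Lemma invn_01 : 0 <= (1 / n%:R : R) <= 1.
Proof. by rewrite mul1r invr_ge0 ler0n invf_le1 // ?ler1n // ltr0n. Qed.

Lemma bitprob_ge0 (p : R) b : 0 <= p <= 1 -> 0 <= bitprob p b.
Proof. by case/andP => p_ge0 p_le1; case: b => /=; lra. Qed.

Lemma flip_p_01 x i : 0 <= flip_p R e x i <= 1.
Proof. by rewrite /flip_p; case: ifP => _; [apply/andP; split; lra | exact: invn_01]. Qed.

Lemma sum_prod_bitprob (p : 'I_n -> R) x :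
  \sum_(x' : bs n) \prod_(i < n) bitprob (p i) (x i != x' i) = 1.
Proof.
rewrite -(bigA_distr_bigA (fun i b => bitprob (p i) (x i != b))) /=.
by rewrite big1 // => i _; rewrite big_bool /bitprob; case: (x i) => /=; lra.
Qed.

Lemma mut_prob_ge0 x x' : 0 <= mut_prob R e x x'.
Proof.
apply: addr_ge0; apply: mulr_ge0; rewrite ?divr_ge0 //; apply: prodr_ge0 => i _;
  by apply: bitprob_ge0; rewrite ?flip_p_01 ?invn_01.
Qed.

Lemma mut_prob_sum1 x : \sum_(x' : bs n) mut_prob R e x x' = 1.
Proof. by rewrite big_split /= -!mulr_sumr !sum_prod_bitprob; lra. Qed.

Lemma one_sub_invn_expr_ge : 1/4 <= (1 - 1 / n%:R) ^+ n.-1 :> R.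
Proof.
have half_ge k : (2 * k <= n)%N -> 1/2 <= (1 - 1 / n%:R) ^+ k :> R.
  move=> le_k; apply: le_trans (bernoulli_ineq k invn_01).
  have : k%:R * 2 <= n%:R :> R by rewrite -natrM ler_nat mulnC.
  have : n%:R * n%:R^-1 = 1 :> R by rewrite mulfV // pnatr_eq0 -lt0n.
  have : 0 <= n%:R^-1 :> R by rewrite invr_ge0.
  by rewrite mul1r; nra.
have -> : n.-1 = (n.-1 %/ 2 + (n.-1 - n.-1 %/ 2))%N by lia.
rewrite exprD; have -> : 1/4 = 1/2 * (1/2) :> R by lra.
by apply: ler_pM; try lra; apply: half_ge; lia.
Qed.

Lemma mut_prob_flip_bit x v : 1 / (8 * n%:R) <= mut_prob R e x (flip_bit x v).
Proof.
have flip_ne i : (x i != flip_bit x v i) = (i == v).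
  by rewrite ffunE; case: (i == v); case: (x i).
suff : 1 / (8 * n%:R) <= 1/2 * \prod_(i < n) bitprob (1 / n%:R) (x i != flip_bit x v i) :> R.
  have : 0 <= 1/2 * \prod_(i < n) bitprob (flip_p R e x i) (x i != flip_bit x v i).
    by apply: mulr_ge0; rewrite ?divr_ge0 // prodr_ge0 // => i _; rewrite bitprob_ge0 ?flip_p_01.
  rewrite /mut_prob; lra.
rewrite (bigD1 v) //= flip_ne eqxx (eq_bigr (fun=> 1 - 1 / n%:R)) => [|i]; last first.
  by rewrite flip_ne => /negbTE->.
rewrite prodr_const cardC1 card_ord /=.
have n_pos : 0 < n%:R :> R by rewrite ltr0n.
have -> : 1 / (8 * n%:R) = 1/2 * (1 / n%:R * (1/4)) :> R by field; rewrite gt_eqF.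
by rewrite !ler_wpM2l ?one_sub_invn_expr_ge ?(andP invn_01).1 //; lra.
Qed.

End Mutation.

Section Runtime.
Variables (R : realType) (n : nat) (e : rel 'I_n) (w : 'I_n -> nat).
Variables (pick1 pick2 : {set bs n} -> bs n).
Hypothesis pick1_min : argmin_picker (f1 R e w) pick1.
Hypothesis pick2_min : argmin_picker (f2 R e w) pick2.
Hypothesis n_gt0 : (0 < n)%N.
Implicit Types (P Q : {set bs n}).

Local Notation step := (step pick1 pick2).
Local Notation trans := (trans R e pick1 pick2).
Local Notation surv := (surv R e w pick1 pick2).
Local Notation target := (target R e w).

Lemma init_ge0 P : 0 <= init R P.
Proof. by apply: sumr_ge0 => x _; rewrite mulr_ge0 ?invr_ge0. Qed.

Lemma init_sum1 : \sum_(P : {set bs n}) init R P = 1.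
Proof.
rewrite exchange_big (eq_bigr (fun=> (2 ^ n)%:R^-1)) => [|x _]; last first.
  by rewrite -mulr_sumr (bigD1 [set x]) //= eqxx big1 ?addr0 ?mulr1 // => P /negbTE->.
rewrite sumr_const card_ffun card_bool card_ord -[_ *+ _]mulr_natr.
by rewrite mulVf // pnatr_eq0 expn_eq0.
Qed.

Lemma trans_ge0 Q P : 0 <= trans Q P.
Proof.
by apply: sumr_ge0 => x _; apply: sumr_ge0 => x' _; rewrite !mulr_ge0 ?invr_ge0 ?mut_prob_ge0.
Qed.

Lemma trans_sum_mul Q (F : {set bs n} -> R) : \sum_P trans Q P * F P =
  \sum_(x in Q) \sum_(x' : bs n) #|Q|%:R^-1 * mut_prob R e x x' * F (step Q x').
Proof.
under eq_bigr do rewrite mulr_suml; rewrite exchange_big /=; apply: eq_bigr => x _.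
under eq_bigr do rewrite mulr_suml; rewrite exchange_big /=; apply: eq_bigr => x' _.
rewrite (bigD1 (step Q x')) //= eqxx mulr1 big1 ?addr0 // => P.
by rewrite eq_sym => /negbTE->; rewrite mulr0 mul0r.
Qed.

Lemma surv_ge0 t P : 0 <= surv t P.
Proof.
elim: t P => [|t IH] P /=; case: ifP => // _; first exact: init_ge0.
by apply: sumr_ge0 => Q _; rewrite mulr_ge0 ?trans_ge0.
Qed.

Lemma surv_succ t P : surv t.+1 P <= \sum_Q surv t Q * trans Q P.
Proof.
by rewrite /=; case: ifP => // _; apply: sumr_ge0 => Q _; rewrite mulr_ge0 ?surv_ge0 ?trans_ge0.
Qed.

Lemma surv_target t P : surv t P != 0 -> ~ target P.
Proof. by case: t => [|t] /=; case: asboolP => // _; rewrite eqxx. Qed.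

Lemma surv_pop_inv t P : surv t P != 0 -> pop_inv P.
Proof.
elim: t P => [|t IH] P /=; case: ifP => _; rewrite ?eqxx // => /eqP.
  case/psumr_neq0P => [x _|x /andP[_]]; first by rewrite mulr_ge0 ?invr_ge0.
  case: eqP => [->|]; last by rewrite mulr0 ltxx.
  split=> [|k]; first by rewrite cards1.
  apply: leq_trans (_ : #|[set x]| <= 2)%N; last by rewrite cards1.
  by apply/subset_leq_card/fintype.subsetP => y; rewrite inE => /andP[].
case/psumr_neq0P => [Q _|Q /andP[_]]; first by rewrite mulr_ge0 ?surv_ge0 ?trans_ge0.
have [->|sQ] := eqVneq (surv t Q) 0; first by rewrite mul0r ltxx.
rewrite pmulr_rgt0; last by rewrite lt0r sQ surv_ge0.
move=> /lt0r_neq0/eqP.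
case/psumr_neq0P => [x _|x /andP[_]].
  by apply: sumr_ge0 => x' _; rewrite !mulr_ge0 ?invr_ge0 ?mut_prob_ge0.
move=> /lt0r_neq0/eqP; case/psumr_neq0P => [x' _|x' /andP[_]].
  by rewrite !mulr_ge0 ?invr_ge0 ?mut_prob_ge0.
case: eqP => [<- _|]; last by rewrite mulr0 ltxx.
exact: (step_pop_inv pick1_min pick2_min x' (IH Q sQ)).
Qed.

(* One step raises the potential with probability at least
   [1 / (#|Q| * 8 n) >= 1 / drift_scale], since [#|Q| <= 2 (n + 1)]. *)
Definition drift_scale : R := (16 * n * n.+1)%:R.
Definition deficit Q : R := drift_scale * (2 * n + 2 - potential R e w Q)%:R.

Lemma deficit_ge0 Q : 0 <= deficit Q.
Proof. by rewrite mulr_ge0. Qed.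

Lemma deficit_le Q : deficit Q <= drift_scale * (2 * n + 2)%:R.
Proof. by rewrite ler_wpM2l // ler_nat leq_subr. Qed.

Lemma deficit_step Q x' : deficit (step Q x') <= deficit Q.
Proof. by rewrite ler_wpM2l // ler_nat leq_sub2l // potential_step. Qed.

Lemma deficit_step_lt Q x' : (potential R e w Q < potential R e w (step Q x'))%N ->
  deficit (step Q x') <= deficit Q - drift_scale.
Proof.
move=> lt_pot; rewrite /deficit -[X in _ - X]mulr1 -mulrBr ler_wpM2l //.
by have := potential_le R e w (step Q x'); rewrite lerBrDr natr1 ler_nat; lia.
Qed.

Lemma flip_bit_step_weight Q x v : pop_inv Q ->
  1 <= #|Q|%:R^-1 * mut_prob R e x (flip_bit x v) * drift_scale.
Proof.
move=> invQ; have Q_pos : 0 < #|Q|%:R :> R by rewrite ltr0n invQ.1.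
have n_pos : 0 < n%:R :> R by rewrite ltr0n.
have mut_ge : 1 <= mut_prob R e x (flip_bit x v) * (8 * n%:R).
  by rewrite -ler_pdivrMr ?mulr_gt0 //; exact: mut_prob_flip_bit.
have card_ge : 1 <= (2 * n.+1)%:R / #|Q|%:R :> R.
  by rewrite ler_pdivlMr // mul1r ler_nat card_pop_inv.
have -> : #|Q|%:R^-1 * mut_prob R e x (flip_bit x v) * drift_scale =
    mut_prob R e x (flip_bit x v) * (8 * n%:R) * ((2 * n.+1)%:R / #|Q|%:R).
  by rewrite /drift_scale !natrM; field; rewrite gt_eqF.
by have := ler_pM ler01 ler01 mut_ge card_ge; rewrite mulr1.
Qed.

Lemma deficit_drift Q : pop_inv Q -> ~ target Q ->
  \sum_P trans Q P * deficit P <= deficit Q - 1.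
Proof.
move=> invQ no_target.
have [x0 [v [x0Q lt_pot]]] := potential_progress pick2 pick1_min invQ.1 no_target.
pose a (p : bs n * bs n) := #|Q|%:R^-1 * mut_prob R e p.1 p.2.
have a_ge0 p : 0 <= a p by rewrite mulr_ge0 ?invr_ge0 ?mut_prob_ge0.
rewrite trans_sum_mul pair_big_dep /=.
apply: le_trans (expectation_le_drop (a := a) (f := fun p => deficit (step Q p.2))
    (c := deficit Q) (i0 := (x0, flip_bit x0 v)) _ _ _ _ (deficit_step_lt lt_pot)) _ => //.
- rewrite -(pair_big_dep (mem Q) (fun _ _ => true) (fun x x' => a (x, x'))) /=.
  rewrite (eq_bigr (fun=> #|Q|%:R^-1)) => [|x _]; last first.
    by rewrite -mulr_sumr mut_prob_sum1 ?mulr1.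
  by rewrite sumr_const -[_ *+ _]mulr_natr mulVf // pnatr_eq0 -lt0n invQ.1.
- by move=> p _; exact: deficit_step.
- by rewrite andbT.
by have := flip_bit_step_weight x0 v invQ; rewrite /a /=; lra.
Qed.

Lemma partial_exp_time_le N :
  partial_exp_time R e w pick1 pick2 N <= drift_scale * (2 * n + 2)%:R.
Proof.
apply: le_trans (additive_drift surv_ge0 deficit_ge0 surv_succ _ N) _.
  move=> t Q sQ; apply: deficit_drift; [exact: surv_pop_inv sQ | exact: surv_target sQ].
apply: le_trans (_ : \sum_P init R P * (drift_scale * (2 * n + 2)%:R) <= _).
  apply: ler_sum => P _; rewrite ler_pM ?surv_ge0 ?deficit_ge0 ?deficit_le //.
  by rewrite /=; case: ifP => _; rewrite ?init_ge0.
by rewrite -mulr_suml init_sum1 mul1r.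
Qed.

End Runtime.

Theorem lemma10 :
  exists (c n0 : nat),
  forall (R : realType) (n : nat) (e : rel 'I_n) (w : 'I_n -> nat)
         (pick1 pick2 : {set bs n} -> bs n),
    (n0 <= n)%N ->
    symmetric e -> irreflexive e ->
    (forall i, (0 < w i)%N) ->
    argmin_picker (@f1 R n e w) pick1 ->
    argmin_picker (@f2 R n e w) pick2 ->
    forall N : nat,
      @partial_exp_time R n e w pick1 pick2 N <= (c * n ^ 3)%:R :> R.
Proof.
exists 128%N, 1%N => R n e w pick1 pick2 n_gt0 _ _ _ pick1_min pick2_min N.
apply: le_trans (partial_exp_time_le pick1_min pick2_min n_gt0 N) _.
rewrite /drift_scale -natrM ler_nat.
have : (n.+1 <= 2 * n)%N by lia.
rewrite !expnS expn0; nia.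
Qed.
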